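(* If $C$ is a free $E$-linear code of length $2n$, then $SHull(C)$ is also free.
   Context: $E=\langle \kappa,\tau \mid 2\kappa=2\tau=0,\ \kappa^2=\kappa,\ \tau^2=\tau,\ \kappa\tau=\kappa,\ \tau\kappa=\tau\rangle$ is the non-unital ring $\{0,\kappa,\tau,\zeta\}$, $\zeta=\kappa+\tau$, with $e\kappa=e\tau=e$, $e\zeta=0$ for all $e\in E$. Every $e\in E$ is uniquely $u\kappa+v\zeta$ ($u,v\in\mathbb{F}_2$); $\pi(u\kappa+v\zeta)=u$, componentwise. An $E$-linear code of length $2n$ is a left $E$-submodule $C\subseteq E^{2n}$; $C_{Res}=\pi(C)$, $C_{Tor}=\{v\in\mathbb{F}_2^{2n}:\zeta v\in C\}$ (componentwise, $0\cdot\zeta=0,1\cdot\zeta=\zeta$); $C$ is free if $C_{Res}=C_{Tor}$. Symplectic inner product: $\langle (u|v),(u'|v')\rangle_s=\sum_i u_iv'_i+\sum_i v_iu'_i$. $C^{\perp_S}=\{z\in E^{2n}:\langle z,w\rangle_s=\langle w,z\rangle_s=0\ \forall w\in C\}$, $SHull(C)=C\cap C^{\perp_S}$. *)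

From mathcomp Require Import all_boot.
Set Implicit Arguments. Unset Strict Implicit. Unset Printing Implicit Defensive.

(* The non-unital ring E = {0, kappa, tau, zeta}, zeta = kappa + tau.
   An element u*kappa + v*zeta (u v in F_2) is encoded as the pair (u, v). *)
Definition E : finType := (bool * bool)%type.
Definition E0 : E := (false, false).
Definition Ekappa : E := (true, false).
Definition Ezeta : E := (false, true).
Definition Etau : E := (true, true).

Definition Eadd (x y : E) : E := (addb x.1 y.1, addb x.2 y.2).
(* multiplication: e*kappa = e*tau = e, e*zeta = 0, bilinear; hence
   e * (a kappa + b zeta) = a e. *)
Definition Emul (x y : E) : E := if y.1 then x else E0.
Definition Epi (x : E) : bool := x.1.

(* words of length 2n, written (u | v) with u = first n, v = last n coords *)
Definition word (n : nat) := {ffun 'I_(n + n) -> E}.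
Definition bword (n : nat) := {ffun 'I_(n + n) -> bool}.

Definition wadd n (x y : word n) : word n := [ffun i => Eadd (x i) (y i)].
Definition wscale n (e : E) (x : word n) : word n := [ffun i => Emul e (x i)].
Definition wzero n : word n := [ffun => E0].

Definition Elinear n (C : {set word n}) : Prop :=
  [/\ wzero n \in C,
      (forall x y, x \in C -> y \in C -> wadd x y \in C) &
      (forall (e : E) x, x \in C -> wscale e x \in C)].

Definition Cres n (C : {set word n}) : {set bword n} :=
  [set ([ffun i => Epi (c i)] : bword n) | c : word n in C].
Definition zeta_lift n (v : bword n) : word n :=
  [ffun i => if v i then Ezeta else E0].
Definition Ctor n (C : {set word n}) : {set bword n} :=
  [set v | zeta_lift v \in C].
Definition Efree n (C : {set word n}) : Prop := Cres C = Ctor C.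

Definition symp n (x y : word n) : E :=
  Eadd (\big[Eadd/E0]_(i < n) Emul (x (lshift n i)) (y (rshift n i)))
       (\big[Eadd/E0]_(i < n) Emul (x (rshift n i)) (y (lshift n i))).

Definition sdual n (C : {set word n}) : {set word n} :=
  [set z | [forall w in C, (symp z w == E0) && (symp w z == E0)]].
Definition SHull n (C : {set word n}) : {set word n} := C :&: sdual C.

From mathcomp Require Import all_boot.
Set Implicit Arguments. Unset Strict Implicit. Unset Printing Implicit Defensive.

(* Write a word as x = kappa * a + zeta * b with a = wres x and b = wtor x in
   F_2^(2n).  Then <x, y>_s = kappa <a, pi y> + zeta <b, pi y> for the binary
   symplectic form <,>, so membership in the symplectic dual of C only sees
   the F_2-codes Cres C and Ctor C.  If c lies in the hull, zeta * pi c still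
   does; conversely if zeta * v lies in the hull, freeness gives v = pi c with
   c in C, and kappa * v = kappa * c lies in the hull because the torsion
   parts of words of C lie in Ctor C = Cres C, which is orthogonal to v. *)

Definition wres n (x : word n) : bword n := [ffun i => Epi (x i)].
Definition wtor n (x : word n) : bword n := [ffun i => (x i).2].
Definition kappa_lift n (v : bword n) : word n :=
  [ffun i => if v i then Ekappa else E0].

Definition bsymp n (a b : bword n) : bool :=
  \big[addb/false]_(i < n) (a (lshift n i) && b (rshift n i))
  (+) \big[addb/false]_(i < n) (a (rshift n i) && b (lshift n i)).

Lemma bsympC n (a b : bword n) : bsymp a b = bsymp b a.
Proof.
rewrite /bsymp addbC.
by congr (_ (+) _); apply: eq_bigr => i _; rewrite andbC.
Qed.

Lemma bsymp0r n (a : bword n) : bsymp a [ffun => false] = false.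
Proof. by rewrite /bsymp !big1 // => i _; rewrite ffunE andbF. Qed.

Lemma bsymp0l n (b : bword n) : bsymp [ffun => false] b = false.
Proof. by rewrite bsympC bsymp0r. Qed.

Lemma sympE n (x y : word n) :
  symp x y = (bsymp (wres x) (wres y), bsymp (wtor x) (wres y)).
Proof.
have fst_morph : {morph fst : e f / Eadd e f >-> addb e f} by [].
have snd_morph : {morph snd : e f / Eadd e f >-> addb e f} by [].
rewrite [symp x y]surjective_pairing /symp /bsymp /=.
rewrite !(big_morph _ fst_morph (erefl : E0.1 = false)).
rewrite !(big_morph _ snd_morph (erefl : E0.2 = false)).
by congr (_ (+) _, _ (+) _); apply: eq_bigr => i _;
  rewrite !ffunE /Emul /Epi; case: ifP; rewrite ?andbT ?andbF.
Qed.

Lemma wres_zeta_lift n (v : bword n) : wres (zeta_lift v) = [ffun => false].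
Proof. by apply/ffunP => i; rewrite !ffunE; case: (v i). Qed.

Lemma wtor_zeta_lift n (v : bword n) : wtor (zeta_lift v) = v.
Proof. by apply/ffunP => i; rewrite !ffunE; case: (v i). Qed.

Lemma wres_kappa_lift n (v : bword n) : wres (kappa_lift v) = v.
Proof. by apply/ffunP => i; rewrite !ffunE; case: (v i). Qed.

Lemma wtor_kappa_lift n (v : bword n) : wtor (kappa_lift v) = [ffun => false].
Proof. by apply/ffunP => i; rewrite !ffunE; case: (v i). Qed.

Lemma CresP n (C : {set word n}) (v : bword n) :
  reflect (exists2 c, c \in C & v = wres c) (v \in Cres C).
Proof. exact: imsetP. Qed.

Lemma zeta_lift_sdual n (C : {set word n}) (v : bword n) :
  (zeta_lift v \in sdual C) = [forall w in C, ~~ bsymp v (wres w)].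
Proof.
rewrite inE; apply: eq_forallb_in => w _.
by rewrite !sympE wres_zeta_lift wtor_zeta_lift bsymp0l !bsymp0r andbT.
Qed.

Lemma kappa_lift_sdual n (C : {set word n}) (v : bword n) :
  (kappa_lift v \in sdual C) =
  [forall w in C, ~~ bsymp v (wres w) && ~~ bsymp (wtor w) v].
Proof.
rewrite inE; apply: eq_forallb_in => w _.
rewrite !sympE wres_kappa_lift wtor_kappa_lift bsymp0l (bsympC (wres w)).
by case: (bsymp v _); case: (bsymp (wtor w) v).
Qed.

Section LinearCode.

Variables (n : nat) (C : {set word n}).
Hypothesis linC : Elinear C.

Lemma wres_in_Ctor c : c \in C -> wres c \in Ctor C.
Proof.
have [_ _ scaleC] := linC; move=> cC; rewrite inE.
suff -> : zeta_lift (wres c) = wscale Ezeta c by exact: scaleC.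
by apply/ffunP => i; rewrite !ffunE /Emul /Epi; case: (c i) => [[] []].
Qed.

Lemma wtor_in_Ctor c : c \in C -> wtor c \in Ctor C.
Proof.
have [_ addC scaleC] := linC; move=> cC; rewrite inE.
suff -> : zeta_lift (wtor c) = wadd c (wscale Ekappa c) by rewrite addC ?scaleC.
by apply/ffunP => i; rewrite !ffunE /Emul /Eadd; case: (c i) => [[] []].
Qed.

Lemma kappa_lift_wres_in c : c \in C -> kappa_lift (wres c) \in C.
Proof.
have [_ _ scaleC] := linC; move=> cC.
suff -> : kappa_lift (wres c) = wscale Ekappa c by exact: scaleC.
by apply/ffunP => i; rewrite !ffunE /Emul /Epi; case: (c i) => [[] []].
Qed.

Lemma Cres_SHull_sub_Ctor : Cres (SHull C) \subset Ctor (SHull C).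
Proof.
apply/subsetP => v /CresP [c]; rewrite /SHull in_setI => /andP [cC cD] ->.
have := wres_in_Ctor cC; rewrite inE => zC.
rewrite inE /SHull in_setI zC zeta_lift_sdual.
apply/forall_inP => w wC.
move: cD; rewrite inE => /forall_inP /(_ w wC) /andP [/eqP].
by rewrite sympE => -[-> _].
Qed.

Hypothesis freeC : Efree C.

Lemma Ctor_SHull_sub_Cres : Ctor (SHull C) \subset Cres (SHull C).
Proof.
apply/subsetP => v; rewrite inE /SHull in_setI zeta_lift_sdual.
case/andP => zvC /forall_inP v_orth.
have /CresP [c cC vE] : v \in Cres C by rewrite freeC inE.
apply/CresP; exists (kappa_lift v); last by rewrite wres_kappa_lift.
rewrite /SHull in_setI {1}vE kappa_lift_wres_in //= kappa_lift_sdual.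
apply/forall_inP => w wC; rewrite v_orth //=.
have /CresP [w' w'C ->] : wtor w \in Cres C by rewrite freeC wtor_in_Ctor.
by rewrite bsympC v_orth.
Qed.

End LinearCode.

Theorem mainTheorem15 (n : nat) (C : {set word n}) :
  Elinear C -> Efree C -> Efree (SHull C).
Proof.
move=> linC freeC; apply/eqP; rewrite eqEsubset.
by rewrite Cres_SHull_sub_Ctor // Ctor_SHull_sub_Cres.
Qed.
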